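(* Let $k\ge 1$ be an integer and let $\vec G=(V,\vec E)$ be a directed graph whose underlying undirected graph $G=(V,E)$ has an $f$-weighted $\beta$-orientation for every mapping $f:E\to\mathbb{Z}_{2k+1}\setminus\{0\}$ and every $\mathbb{Z}_{2k+1}$-boundary $\beta$. For every arc $\vec e\in\vec E$, let $L(\vec e)$ be a set of two distinct elements of $\mathbb{Z}_{2k+1}$. Then for every $\mathbb{Z}_{2k+1}$-boundary $\beta$, $\vec G$ has a $\mathbb{Z}_{2k+1}$-flow $g$ with boundary $\beta$ such that $g(\vec e)\in L(\vec e)$ for every $\vec e\in\vec E$.
   Context: Graphs are finite and may have multiple edges but no loops. A $\mathbb{Z}_m$-boundary is a map $\beta:V\to\mathbb{Z}_m$ with $\sum_{v\in V}\beta(v)\equiv0\pmod m$. For an orientation (or directed graph) $\vec G$ and $v\in V$, $\delta^+_{\vec G}(v)$ (resp. $\delta^-_{\vec G}(v)$) is the set of arcs leaving (resp. entering) $v$, and for a weight map $h$ on edges/arcs, $\partial h(v)=\sum_{\vec e\in\delta^+_{\vec G}(v)}h(e)-\sum_{\vec e\in\delta^-_{\vec G}(v)}h(e)$. Given $f:E\to\mathbb{Z}_m$, an orientation of $G$ is an $f$-weighted $\beta$-orientation if $\partial f(v)\equiv\beta(v)\pmod m$ for all $v$. A $\mathbb{Z}_m$-flow with boundary $\beta$ in $\vec G$ is a map $g:\vec E\to\mathbb{Z}_m$ with $\partial g(v)\equiv\beta(v)\pmod m$ for all $v$. *)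

From HB Require Import structures.
From mathcomp Require Import all_boot all_order all_algebra.
Set Implicit Arguments. Unset Strict Implicit. Unset Printing Implicit Defensive.
Import GRing.Theory.
Local Open Scope ring_scope.

(* A (multi)graph with vertex type V and edge type E: edge e joins
   [tl e] and [hd e]; as a directed graph, e is the arc tl e -> hd e.
   No loops: tl e != hd e. *)
Definition loopless (V E : finType) (tl hd : E -> V) := forall e, tl e != hd e.

Definition is_boundary (m : nat) (V : finType) (beta : V -> 'Z_m) :=
  \sum_(v : V) beta v = 0.

Definition bdry (m : nat) (V E : finType) (tl hd : E -> V) (h : E -> 'Z_m) (v : V)
  : 'Z_m := \sum_(e | tl e == v) h e - \sum_(e | hd e == v) h e.

(* An orientation of the underlying undirected graph: o e = true keeps
   e oriented tl e -> hd e, o e = false orients it hd e -> tl e. *)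
Definition otl (V E : finType) (tl hd : E -> V) (o : E -> bool) e :=
  if o e then tl e else hd e.
Definition ohd (V E : finType) (tl hd : E -> V) (o : E -> bool) e :=
  if o e then hd e else tl e.

Definition has_weighted_orientation (m : nat) (V E : finType) (tl hd : E -> V)
  (f : E -> 'Z_m) (beta : V -> 'Z_m) :=
  exists o : E -> bool, forall v, bdry (otl tl hd o) (ohd tl hd o) f v = beta v.

(* Write L(e) = {a e, b e} and f = b - a, which is nowhere zero.  Choosing
   g e = b e on the arcs kept by an orientation and g e = a e on the reversed
   ones gives 2 g - a - b = ±f, so an f-weighted orientation with boundary
   2 beta - da - db yields 2 dg = 2 beta, and 2 is invertible modulo 2k+1.
   The hypothesis k >= 1 is needed only for that, since ['Z_1] denotes
   ['Z_2]. *)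

From HB Require Import structures.
From mathcomp Require Import all_boot all_order all_algebra.
From mathcomp Require Import ring.
Set Implicit Arguments. Unset Strict Implicit. Unset Printing Implicit Defensive.
Import GRing.Theory.
Local Open Scope ring_scope.

Section Boundary.
Context {m : nat} {V E : finType} {tl hd : E -> V}.
Implicit Types (F G : E -> 'Z_m) (v : V).

Lemma eq_bdry F G : F =1 G -> bdry tl hd F =1 bdry tl hd G.
Proof. by move=> eqFG v; rewrite /bdry !(eq_bigr _ (fun e _ => eqFG e)). Qed.

Lemma bdryD F G v :
  bdry tl hd (fun e => F e + G e) v = bdry tl hd F v + bdry tl hd G v.
Proof. by rewrite /bdry !big_split /=; ring. Qed.

Lemma bdryN F v : bdry tl hd (fun e => - F e) v = - bdry tl hd F v.
Proof. by rewrite /bdry !sumrN opprD opprK. Qed.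

Lemma bdryB F G v :
  bdry tl hd (fun e => F e - G e) v = bdry tl hd F v - bdry tl hd G v.
Proof. by rewrite bdryD bdryN. Qed.

Lemma bdryMl (c : 'Z_m) F v :
  bdry tl hd (fun e => c * F e) v = c * bdry tl hd F v.
Proof. by rewrite /bdry -!mulr_sumr mulrBr. Qed.

Lemma is_boundary_bdry F : is_boundary (bdry tl hd F).
Proof.
have sum_fibres (s : E -> V) : \sum_v \sum_(e | s e == v) F e = \sum_e F e.
  by rewrite (partition_big s predT).
by rewrite /is_boundary /bdry sumrB !sum_fibres subrr.
Qed.

Lemma bdry_orient (o : E -> bool) F v :
  bdry (otl tl hd o) (ohd tl hd o) F v
  = bdry tl hd (fun e => if o e then F e else - F e) v.
Proof.
rewrite /bdry !(big_mkcond (fun e => _ == v)) -!sumrB.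
apply: eq_bigr => e _; rewrite /otl /ohd; case: (o e) => //=.
by case: (tl e == v); case: (hd e == v); ring.
Qed.

End Boundary.

Lemma two_unit_Zp_odd {k : nat} : (0 < k)%N -> (2 : 'Z_(k.*2.+1)) \is a GRing.unit.
Proof. by move=> k_gt0; rewrite unitZpE ?ltnS ?double_gt0 // coprimen2 /= odd_double. Qed.

Lemma cards2_choice (T E : finType) (L : E -> {set T}) :
  (forall e, #|L e| = 2%N) ->
  exists a b : E -> T, forall e, a e != b e /\ L e = [set a e; b e].
Proof.
move=> cardL.
have /fin_all_exists [ab Lab] : forall e, exists ab : T * T,
    ab.1 != ab.2 /\ L e = [set ab.1; ab.2].
  by move=> e; have /eqP/cards2P [a [b Lab]] := cardL e; exists (a, b).
by exists (fst \o ab), (snd \o ab).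
Qed.

Theorem lemma9 (k : nat) (V E : finType) (tl hd : E -> V) :
  (1 <= k)%N ->
  loopless tl hd ->
  (forall (f : E -> 'Z_(k.*2.+1)) (beta : V -> 'Z_(k.*2.+1)),
      (forall e, f e != 0) -> is_boundary beta ->
      has_weighted_orientation tl hd f beta) ->
  forall (L : E -> {set 'Z_(k.*2.+1)}),
  (forall e, #|L e| = 2%N) ->
  forall beta : V -> 'Z_(k.*2.+1), is_boundary beta ->
  exists g : E -> 'Z_(k.*2.+1),
    (forall v, bdry tl hd g v = beta v) /\ (forall e, g e \in L e).
Proof.
move=> k_gt0 _ orientable L cardL beta beta_bd.
have [a [b Lab]] := cards2_choice cardL.
pose beta' v := 2 * beta v - bdry tl hd a v - bdry tl hd b v.
have beta'_bd : is_boundary beta'.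
  by rewrite /is_boundary 2!sumrB -mulr_sumr beta_bd !is_boundary_bdry mulr0 !subrr.
have f_neq0 e : b e - a e != 0 by rewrite subr_eq0 eq_sym; case: (Lab e).
have [o bdry_o] := orientable _ _ f_neq0 beta'_bd.
pose g e := if o e then b e else a e.
exists g; split => [v | e]; last first.
  by case: (Lab e) => _ ->; rewrite /g !inE; case: (o e); rewrite eqxx ?orbT.
apply: (mulrI (two_unit_Zp_odd k_gt0)).
have signed_f : (fun e => if o e then b e - a e else - (b e - a e))
    =1 (fun e => 2 * g e - a e - b e) by move=> e; rewrite /g; case: (o e); ring.
move: (bdry_o v); rewrite bdry_orient (eq_bdry signed_f) !bdryB bdryMl.
rewrite /beta' => /(congr1 (fun x => x + bdry tl hd b v + bdry tl hd a v)).
by rewrite !subrK.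
Qed.
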